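(* Let $n\ge 2$ and $t\ge 0$ be integers, and let $a_1,\dots,a_t$ be integers with $1<a_1<\cdots<a_t<n$ and $\gcd(a_j,2n)=1$ for $1\le j\le t$. Then for any edge $e$ of $C_{2n}(1,a_1,\dots,a_t)$, the graph $C_{2n}(1,a_1,\dots,a_t)-e$ obtained by deleting $e$ satisfies $\chi_{la}(C_{2n}(1,a_1,\dots,a_t)-e)=3$.
   Context: For an integer $m\ge 3$ and integers $s_1,\dots,s_k$, the circulant graph $C_m(s_1,\dots,s_k)$ is the simple graph with vertex set $\mathbb Z_m$ in which distinct vertices $u,v$ are adjacent if and only if $u-v\equiv \pm s_i\pmod m$ for some $i$. For a connected graph $G=(V,E)$ with $q=|E|$, a local antimagic labeling is a bijection $f:E\to\{1,\dots,q\}$ such that adjacent vertices $x,y$ satisfy $f^+(x)\ne f^+(y)$, where $f^+(x)=\sum f(e)$ over edges $e$ incident to $x$; $\chi_{la}(G)$ is the minimum number of distinct values of $f^+$ over all local antimagic labelings $f$ of $G$. *)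

From mathcomp Require Import all_boot all_order.
Set Implicit Arguments. Unset Strict Implicit. Unset Printing Implicit Defensive.

(* A simple graph on a finite vertex type V is given by an adjacency relation
   (assumed symmetric and irreflexive where relevant). *)

Definition circ_adj (m : nat) (S : seq nat) (u v : 'I_m) : bool :=
  (u != v) && has (fun s => ((u + s) %% m == v) || ((v + s) %% m == u)) S.

Definition edges (V : finType) (adj : rel V) : {set {set V}} :=
  [set e : {set V} | [exists u, exists v, adj u v && (e == [set u; v])]].

Definition del_edge (V : finType) (adj : rel V) (e : {set V}) : rel V :=
  fun u v => adj u v && ([set u; v] != e).

Definition vsum (V : finType) (adj : rel V) (f : {set V} -> nat) (x : V) : nat :=
  \sum_(e in edges adj | x \in e) f e.

Definition local_antimagic (V : finType) (adj : rel V) (f : {set V} -> nat) : Prop :=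
  [/\ {in edges adj &, injective f},
      (forall e, e \in edges adj -> 1 <= f e <= #|edges adj|) &
      (forall x y, adj x y -> vsum adj f x != vsum adj f y)].

Definition num_colors (V : finType) (adj : rel V) (f : {set V} -> nat) : nat :=
  size (undup [seq vsum adj f x | x <- enum V]).

Definition chi_la_eq (V : finType) (adj : rel V) (k : nat) : Prop :=
  (exists f, local_antimagic adj f /\ num_colors adj f = k) /\
  (forall f, local_antimagic adj f -> k <= num_colors adj f).

(* Every step is odd and coprime to 2n, so C_2n(1,a_1,...,a_t) is bipartite
   by parity and each step s traces a Hamiltonian cycle y, y+s, y+2s, ...;
   since all steps are below n these cycles are edge-disjoint and partition
   the edges.

   Lower bound: after deleting e, the cycle of step 1 still contains a
   Hamiltonian path. A proper vertex colouring with only two values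
   alternates along it, so it is constant on each parity class. Both classes
   have n vertices and both carry the total label sum, so the two values
   coincide: a contradiction.

   Upper bound: order the cycles so that e is the first edge of the first
   one, and label the k-th edge of the j-th cycle 2n j + z(k), where
   z = 0, 2n-1, 1, 2n-2, 2, ... is the zigzag. Then e gets the label 0 and
   the remaining edges get 1, ..., |E|-1. Consecutive zigzag values sum to
   2n-1 or 2n, and the wrap-around pair at the start y of the cycles sums to
   n, so a vertex sum depends only on whether the vertex is y, has the parity
   of y, or not: three values, which differ on adjacent vertices. *)

From mathcomp Require Import all_boot all_order.
From mathcomp Require Import zify.
Set Implicit Arguments. Unset Strict Implicit. Unset Printing Implicit Defensive.

Section GraphLabelings.
Variables (V : finType) (adj : rel V).

Lemma set2_inj (a b c d : V) : a != b -> [set a; b] = [set c; d] ->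
  (a = c /\ b = d) \/ (a = d /\ b = c).
Proof.
move=> ab E.
have /set2P ha : a \in [set c; d] by rewrite -E set21.
have /set2P hb : b \in [set c; d] by rewrite -E set22.
by move: ab; case: ha hb => -> [] -> ab; [rewrite eqxx in ab | left | right | rewrite eqxx in ab].
Qed.

Lemma edges_del_edge e : edges (del_edge adj e) = edges adj :\ e.
Proof.
apply/setP => E; rewrite !inE /del_edge; apply/existsP/andP.
  case=> a /existsP[b /andP[/andP[hab hne] /eqP EE]]; subst E.
  by split=> //; apply/existsP; exists a; apply/existsP; exists b; rewrite hab eqxx.
case=> hne /existsP[a /existsP[b /andP[hab /eqP EE]]]; subst E.
by exists a; apply/existsP; exists b; rewrite /del_edge hab hne eqxx.
Qed.

Lemma vsum_del_edge f e x : f e = 0 -> vsum (del_edge adj e) f x = vsum adj f x.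
Proof.
move=> fe0; rewrite /vsum edges_del_edge !big_mkcondr /=.
case: (boolP (e \in edges adj)) => [eE | eNE].
  by rewrite [RHS](big_setD1 e) //= fe0 if_same.
rewrite (_ : edges adj :\ e = edges adj) //.
by apply/setP => E; rewrite in_setD1; case: eqP => // ->; rewrite (negbTE eNE).
Qed.

Lemma local_antimagic_del_edge e f :
  e \in edges adj ->
  {in edges adj &, injective f} ->
  (forall E, E \in edges adj -> f E < #|edges adj|) ->
  f e = 0 ->
  (forall x y, adj x y -> vsum adj f x != vsum adj f y) ->
  local_antimagic (del_edge adj e) f.
Proof.
move=> eE f_inj f_lt f_e proper.
have card_edges : #|edges adj| = #|edges adj :\ e|.+1 by rewrite (cardsD1 e) eE.
split.
- by move=> E E'; rewrite edges_del_edge => /setD1P[_ EE] /setD1P[_ EE']; apply: f_inj.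
- move=> E; rewrite edges_del_edge => /setD1P[Ee EE].
  rewrite -[f E <= _]ltnS -card_edges f_lt // andbT lt0n.
  by apply: contra Ee => /eqP fE; apply/eqP/f_inj; rewrite ?fE.
- by move=> x y /andP[xy _]; rewrite !vsum_del_edge //; apply: proper.
Qed.

Lemma num_colors_le f (s : seq nat) :
  (forall x, vsum adj f x \in s) -> num_colors adj f <= size s.
Proof.
move=> sums_in; apply: uniq_leq_size (undup_uniq _) _ => z.
by rewrite mem_undup => /mapP[x _ ->].
Qed.

Lemma three_le_num_colors f x y z :
  let c := vsum adj f in
  c x != c y -> c y != c z -> c x != c z -> 3 <= num_colors adj f.
Proof.
move=> c xy yz xz; rewrite /num_colors -/c.
apply: (@uniq_leq_size _ [:: c x; c y; c z]); first by rewrite /= !inE negb_or xy xz yz.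
by move=> t; rewrite !inE mem_undup => /or3P[] /eqP->; apply: map_f; rewrite mem_enum.
Qed.

Lemma sum_vsum_bipartition f (P : pred V) :
  (forall x y, adj x y -> P x != P y) ->
  \sum_(x | P x) vsum adj f x = \sum_(E in edges adj) f E.
Proof.
move=> sepP.
rewrite /vsum (exchange_big_dep (mem (edges adj))) /=; last by move=> ? ? _ /andP[].
apply: eq_bigr => E; rewrite inE => EE.
have /existsP[a /existsP[b /andP[ab /eqP E_ab]]] := EE.
have Pab := sepP a b ab.
have a_neq_b : a != b by apply: contraNneq Pab => ->.
rewrite (big_pred1 (if P a then a else b)) // => x; rewrite EE E_ab !inE /=.
have [->|xa] := eqVneq x a; last have [->|xb] := eqVneq x b.
- by move: Pab; case: (P a); case: (P b) => //= _; rewrite ?eqxx // (negbTE a_neq_b).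
- by move: Pab; case: (P a); case: (P b) => //= _; rewrite ?eqxx // eq_sym (negbTE a_neq_b).
- by rewrite andbF; case: (P a); apply/esym/negbTE.
Qed.

Lemma balanced_path_num_colors_ge3 (P : pred V) (N : nat) (w : nat -> V) f :
  (forall x y, adj x y -> P x != P y) ->
  #|[pred x | P x]| = #|[pred x | ~~ P x]| ->
  1 < N ->
  (forall i, i.+1 < N -> adj (w i) (w i.+1)) ->
  (forall x, exists2 i, i < N & w i = x) ->
  (forall x y, adj x y -> vsum adj f x != vsum adj f y) ->
  3 <= num_colors adj f.
Proof.
move=> sepP balanced N_gt1 w_adj w_onto proper; set c := vsum adj f.
have c01 : c (w 0) != c (w 1) by apply/proper/w_adj.
rewrite leqNgt; apply/negP => few.
have two_values x y z : c x != c y -> c y != c z -> c x = c z.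
  by move=> xy yz; apply: contraTeq few => xz; rewrite -leqNgt (three_le_num_colors xy yz xz).
have c_alt i : i < N -> c (w i) = c (w (odd i)).
  elim/ltn_ind: i => -[|[|j]] IH jN //.
  have IHj : c (w j) = c (w (odd j)) by apply: IH; lia.
  rewrite /= negbK -IHj; symmetry; apply: (two_values _ (w j.+1)); apply/proper/w_adj; lia.
have P_alt i : i < N -> P (w i) = P (w 0) (+) odd i.
  elim: i => [|k IHk] kN; first by rewrite addbF.
  move: (sepP _ _ (w_adj k kN)); rewrite IHk /=; last lia.
  by case: (P (w k.+1)); case: (P (w 0)); case: (odd k).
have c_side x : c x = c (w (P x (+) P (w 0))).
  have [i iN <-] := w_onto x; rewrite P_alt // c_alt //.
  by case: (P (w 0)); case: (odd i).
have P_gt0 : 0 < #|[pred x | P x]|.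
  by case Pw0: (P (w 0)); [|rewrite balanced]; apply/card_gt0P; exists (w 0); rewrite inE Pw0.
have sepNP x y : adj x y -> ~~ P x != ~~ P y by move/sepP; case: (P x); case: (P y).
have := sum_vsum_bipartition f sepP; rewrite -(sum_vsum_bipartition f sepNP).
rewrite (eq_bigr (fun=> c (w (~~ P (w 0))))) => [|x Px];
  last by rewrite -/c (c_side x) Px.
rewrite [RHS](eq_bigr (fun=> c (w (P (w 0))))) => [|x /negbTE Px];
  last by rewrite -/c (c_side x) Px.
rewrite !sum_nat_const -balanced => /eqP; rewrite eqn_mul2l eqn0Ngt P_gt0 /=.
by apply/negP; case: (P (w 0)); rewrite //= eq_sym.
Qed.

End GraphLabelings.

Lemma card_ord_count N (P : pred nat) : #|[pred i : 'I_N | P i]| = count P (iota 0 N).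
Proof. by rewrite -sum1_card -sum1_count -[N in iota _ N]subn0 -/(index_iota 0 N) big_mkord. Qed.

Lemma count_odd_iota k : count odd (iota 0 k) = k./2.
Proof.
elim: k => // k IH; rewrite -addn1 iotaD count_cat IH /= addn0.
have := odd_double_half k; have := odd_double_half (k + 1); rewrite oddD /= addbT.
by case: (odd k) => /=; lia.
Qed.

Lemma card_odd_ord n :
  #|[pred i : 'I_(2 * n) | odd i]| = #|[pred i : 'I_(2 * n) | ~~ odd i]|.
Proof.
rewrite (card_ord_count _ odd) (card_ord_count _ (predC odd)).
have := count_predC odd (iota 0 (2 * n)).
by rewrite size_iota count_odd_iota mul2n doubleK -addnn => /addnI.
Qed.

Lemma ord_predE N (k : 'I_N) :
  nat_of_ord (ord_pred k) = if k == 0 :> nat then N.-1 else k.-1.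
Proof.
rewrite /=; case: k => -[|k] kN /=; first by rewrite modn_small // prednK // ltnW.
by rewrite modnDr modn_small // ltnW.
Qed.

Lemma modnD_neq N a s : 0 < s < N -> (a + s) %% N != a %% N.
Proof.
case/andP=> s_gt0 sN; rewrite -[a in _ != a %% _]addn0 eqn_modDl mod0n modn_small //.
by rewrite -lt0n.
Qed.

Lemma ord_gt0 N (y : 'I_N) : 0 < N.
Proof. exact: leq_ltn_trans (leq0n y) (ltn_ord y). Qed.

Definition walk N (y : 'I_N) (s k : nat) : 'I_N :=
  Ordinal (ltn_pmod (y + k * s) (ord_gt0 y)).

Definition step_edge N (y : 'I_N) (s k : nat) : {set 'I_N} :=
  [set walk y s k; walk y s k.+1].

Section Walks.
Variables (N : nat) (y : 'I_N).

Lemma walkS s k : val (walk y s k.+1) = (walk y s k + s) %% N.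
Proof. by rewrite /= modnDml mulSnr addnA. Qed.

Lemma walk_modN s k : walk y s (k %% N) = walk y s k.
Proof. by apply: val_inj => /=; apply/eqP; rewrite eqn_modDl modnMml. Qed.

Lemma walk_neqS s k : 0 < s < N -> walk y s k != walk y s k.+1.
Proof.
move=> s_range; apply/eqP => /(congr1 val); rewrite walkS => /esym/eqP; apply/negP.
by have := modnD_neq (walk y s k) s_range; rewrite (modn_small (ltn_ord _)).
Qed.

Lemma walk_inj s k k' : coprime s N -> k < N -> k' < N -> walk y s k = walk y s k' -> k = k'.
Proof.
move=> s_coprime; wlog kk' : k k' / k <= k'.
  move=> wlog_le kN k'N e; case: (leqP k k') => [le_kk'|/ltnW le_k'k]; first exact: wlog_le.
  exact/esym/wlog_le.
move=> kN k'N /(congr1 val) /= /eqP.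
rewrite eq_sym eqn_modDl eqn_mod_dvd ?leq_mul2r ?kk' ?orbT // -mulnBl.
rewrite Gauss_dvdl; last by rewrite coprime_sym.
by case: (posnP (k' - k)) => [|pos /(dvdn_leq pos)]; lia.
Qed.

Lemma walk_onto s : coprime s N -> forall x, exists2 k, k < N & walk y s k = x.
Proof.
move=> s_coprime x.
have inj : injective (fun k : 'I_N => walk y s k).
  by move=> k k' /(walk_inj s_coprime (ltn_ord k) (ltn_ord k')) /val_inj.
by have [g _ gK] := injF_bij inj; exists (g x); rewrite ?gK.
Qed.

Lemma walk0 s : walk y s 0 = y.
Proof. by apply: val_inj; rewrite /= addn0 modn_small. Qed.

Lemma odd_walk s k : ~~ odd N -> odd (walk y s k) = odd y (+) odd (k * s).
Proof. by move/negbTE=> N_even; rewrite /= odd_mod // oddD. Qed.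

Lemma mem_step_edge s (k kx : 'I_N) : coprime s N ->
  (walk y s kx \in step_edge y s k) = (k == kx) || (k == ord_pred kx).
Proof.
move=> s_coprime; have walk_eq (i j : 'I_N) : (walk y s i == walk y s j) = (i == j).
  by apply/eqP/eqP => [/(walk_inj s_coprime (ltn_ord i) (ltn_ord j)) /val_inj | ->].
rewrite !inE walk_eq -(walk_modN _ k.+1) -[k.+1 %% N]/(val (ordS k)) walk_eq eq_sym.
by congr (_ || _); apply/eqP/eqP => [->|->]; rewrite ?ordSK ?ord_predK.
Qed.

Lemma sum_step_edges s (kx : 'I_N) (g : nat -> nat) : coprime s N -> 1 < N ->
  \sum_(k < N) (if walk y s kx \in step_edge y s k then g k else 0) =
  g kx + g (ord_pred kx).
Proof.
move=> s_coprime N_gt1.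
have kx_neq_pred : kx != ord_pred kx.
  by apply/eqP => /(congr1 (@nat_of_ord N)); rewrite ord_predE; case: eqP; lia.
under eq_bigr => k _ do rewrite mem_step_edge //.
rewrite -big_mkcond (bigD1 kx) ?eqxx //= (big_pred1 (ord_pred kx)) // => k /=.
by case: (eqVneq k kx) => [->|]; rewrite ?(negbTE kx_neq_pred) ?andbT.
Qed.

End Walks.

Section CirculantEdges.
Variables (N : nat) (S : seq nat).

Lemma circ_adj_walk (y : 'I_N) s k : s \in S -> 0 < s < N ->
  circ_adj S (walk y s k) (walk y s k.+1).
Proof.
move=> sS s_range; rewrite /circ_adj walk_neqS //=.
by apply/hasP; exists s => //; rewrite -walkS eqxx.
Qed.

Lemma step_edge_in_edges (y : 'I_N) s k : s \in S -> 0 < s < N ->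
  step_edge y s k \in edges (circ_adj S).
Proof.
move=> sS s_range; rewrite inE; apply/existsP; exists (walk y s k).
by apply/existsP; exists (walk y s k.+1); rewrite circ_adj_walk // eqxx.
Qed.

Lemma circ_adj_step_edge (u v : 'I_N) : circ_adj S u v ->
  exists y s, s \in S /\ [set u; v] = step_edge y s 0.
Proof.
case/andP=> _ /hasP[s sS /orP[] /eqP uv]; [exists u | exists v]; exists s; split=> //.
  congr [set _; _]; apply: val_inj => /=;
    by rewrite ?mul0n ?addn0 ?mul1n ?uv // modn_small.
rewrite setUC; congr [set _; _]; apply: val_inj => /=;
  by rewrite ?mul0n ?addn0 ?mul1n ?uv // modn_small.
Qed.

Lemma circ_edgeP (y : 'I_N) E : {in S, forall s, coprime s N} ->
  E \in edges (circ_adj S) -> exists s k, [/\ s \in S, k < N & E = step_edge y s k].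
Proof.
move=> S_coprime; rewrite inE.
case/existsP=> a /existsP[b /andP[/andP[_ /hasP[s sS ab]] /eqP->]].
wlog a_to_b : a b ab / (a + s) %% N == b.
  move=> wlog_ab; case/orP: (ab) => ?; first exact: wlog_ab.
  by rewrite setUC; apply: wlog_ab; rewrite // orbC.
have [k kN ak] := walk_onto y (S_coprime s sS) a.
exists s, k; split=> //; rewrite /step_edge ak; congr [set _; _]; apply: val_inj.
by rewrite walkS ak (eqP a_to_b).
Qed.

Lemma step_edge_inj (y : 'I_N) s s' k k' :
  coprime s N -> 0 < s -> 0 < s' -> s + s' < N -> k < N -> k' < N ->
  step_edge y s k = step_edge y s' k' -> s = s' /\ k = k'.
Proof.
move=> s_coprime s_gt0 s'_gt0 ss'N kN k'N E.
have s_range : 0 < s < N by rewrite s_gt0; lia.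
case: (set2_inj (walk_neqS y k s_range) E) => -[e1 e2].
  have ss' : s = s'.
    move: (congr1 val e2); rewrite !walkS e1 => /eqP.
    by rewrite eqn_modDl !modn_small //; [move/eqP | lia | lia].
  by subst s'; split=> //; apply: (walk_inj s_coprime kN k'N e1).
exfalso; move: (congr1 val e1); rewrite walkS -e2 walkS modnDml -addnA => /esym/eqP.
apply/negP; rewrite -[X in _ != X](modn_small (ltn_ord (walk y s k))).
by apply: modnD_neq; lia.
Qed.

End CirculantEdges.

Definition zigzag n k := if odd k then (2 * n).-1 - k./2 else k./2.

Lemma zigzag_lt n k : k < 2 * n -> zigzag n k < 2 * n.
Proof. by rewrite /zigzag => kN; have := odd_double_half k; case: (odd k) => /=; lia. Qed.

Lemma zigzag_inj n k k' : k < 2 * n -> k' < 2 * n -> zigzag n k = zigzag n k' -> k = k'.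
Proof.
rewrite /zigzag => kN k'N; have := odd_double_half k; have := odd_double_half k'.
by case: (odd k); case: (odd k') => /=; lia.
Qed.

Lemma zigzag_add_pred n (k : 'I_(2 * n)) :
  zigzag n k + zigzag n (ord_pred k) =
  if k == 0 :> nat then n else if odd k then (2 * n).-1 else 2 * n.
Proof.
rewrite /zigzag ord_predE; have := ltn_ord k.
case: eqP => [-> | k_neq0] kN /=.
  by have := odd_double_half (2 * n).-1; case: odd => /=; lia.
have := odd_double_half k; have := odd_double_half k.-1.
by case: (odd k); case: (odd k.-1) => /=; lia.
Qed.

Section Circulant.
Variables (n : nat) (S : seq nat).
Hypotheses (n_gt1 : 1 < n) (S_coprime : {in S, forall s, coprime s (2 * n)})
  (S_range : {in S, forall s, 0 < s < n}).

Lemma circ_step_odd s : s \in S -> odd s.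
Proof. by move/S_coprime; rewrite -coprimen2; apply: coprime_dvdr; rewrite dvdn_mulr. Qed.

Lemma circ_adj_odd (x x' : 'I_(2 * n)) : circ_adj S x x' -> odd x != odd x'.
Proof.
have N_even : odd (2 * n) = false by rewrite oddM.
case/andP=> _ /hasP[s /circ_step_odd s_odd /orP[] /eqP <-];
  by rewrite odd_mod // oddD s_odd; case: (odd _).
Qed.

Section CirculantLabeling.
Variables (T : seq nat) (y : 'I_(2 * n)).
Hypotheses (T_uniq : uniq T) (S_T : S =i T).

Local Notation m := (size T).

Definition cycle_edge (p : 'I_m * 'I_(2 * n)) := step_edge y (nth 0 T p.1) p.2.

Definition cycle_label (p : 'I_m * 'I_(2 * n)) := 2 * n * p.1 + zigzag n p.2.

Definition edge_label (E : {set 'I_(2 * n)}) :=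
  if [pick p | cycle_edge p == E] is Some p then cycle_label p else 0.

Definition cycle_sum (x : 'I_(2 * n)) :=
  if x == y then n else if odd x == odd y then 2 * n else (2 * n).-1.

Let T_step (j : 'I_m) : nth 0 T j \in S.
Proof. by rewrite S_T mem_nth. Qed.

Lemma cycle_edge_inj : injective cycle_edge.
Proof.
move=> [j k] [j' k'] E; have jS := T_step j; have j'S := T_step j'.
have /andP[s_gt0 sn] := S_range jS; have /andP[s'_gt0 s'n] := S_range j'S.
have ss'N : nth 0 T j + nth 0 T j' < 2 * n by lia.
have [s_eq /val_inj->] :=
  step_edge_inj (S_coprime jS) s_gt0 s'_gt0 ss'N (ltn_ord k) (ltn_ord k') E.
by move/eqP: s_eq; rewrite nth_uniq // => /eqP/val_inj->.
Qed.

Lemma edges_circ_adj : edges (circ_adj S) = cycle_edge @: setT.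
Proof.
apply/setP => E; apply/idP/imsetP => [|[p _ ->]].
  case/(circ_edgeP y S_coprime)=> s [k [sS kN ->]].
  have sT : index s T < m by rewrite index_mem -S_T.
  by exists (Ordinal sT, Ordinal kN); rewrite ?inE // /cycle_edge /= nth_index -?S_T.
have /andP[s_gt0 sn] := S_range (T_step p.1).
by apply: step_edge_in_edges; rewrite ?T_step ?s_gt0 //= (leq_trans sn) // leq_pmull.
Qed.

Lemma edge_label_cycle_edge p : edge_label (cycle_edge p) = cycle_label p.
Proof.
rewrite /edge_label; case: pickP => [q /eqP/cycle_edge_inj -> // | /(_ p)].
by rewrite eqxx.
Qed.

Lemma cycle_label_inj : injective cycle_label.
Proof.
move=> [j k] [j' k'] e.
have z_lt := zigzag_lt (ltn_ord k); have z'_lt := zigzag_lt (ltn_ord k').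
have N_gt0 : 0 < 2 * n by lia.
have e_mod := congr1 (modn^~ (2 * n)) e; have e_div := congr1 (divn^~ (2 * n)) e.
rewrite /cycle_label /= ![2 * n * _]mulnC !modnMDl !modn_small // in e_mod.
rewrite /cycle_label /= ![2 * n * _]mulnC !divnMDl // !divn_small // !addn0 in e_div.
by congr (_, _); apply: val_inj; [exact: e_div | exact: zigzag_inj e_mod].
Qed.

Lemma cycle_label_lt p : cycle_label p < 2 * n * m.
Proof.
apply: (@leq_trans (2 * n * p.1 + 2 * n)); first by rewrite ltn_add2l zigzag_lt.
by rewrite addnC -mulnS leq_mul2l ltn_ord orbT.
Qed.

Lemma sum_cycle_labels (j : 'I_m) x :
  \sum_(k < 2 * n) (if x \in cycle_edge (j, k) then cycle_label (j, k) else 0) =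
  2 * (2 * n * j) + cycle_sum x.
Proof.
have jS := T_step j; have s_coprime := S_coprime jS.
have [kx kxN <-] := walk_onto y s_coprime x.
rewrite /cycle_edge /cycle_label /= -[kx]/(val (Ordinal kxN)).
rewrite (sum_step_edges _ _ (fun k => 2 * n * j + zigzag n k)) //; last by lia.
rewrite addnACA addnn -mul2n zigzag_add_pred /cycle_sum /=; congr (_ + _).
have -> : (walk y (nth 0 T j) kx == y) = (kx == 0).
  rewrite -{2}(walk0 y (nth 0 T j)).
  by apply/eqP/eqP => [/(walk_inj s_coprime kxN (ord_gt0 y)) | ->].
rewrite odd_walk; last by rewrite oddM.
rewrite oddM (circ_step_odd jS) andbT.
by case: eqP; case: (odd y); case: (odd kx).
Qed.

Lemma vsum_edge_label x :
  vsum (circ_adj S) edge_label x = \sum_(j < m) 2 * (2 * n * j) + m * cycle_sum x.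
Proof.
rewrite /vsum big_mkcondr edges_circ_adj big_imset /=; last by move=> p q _ _ /cycle_edge_inj.
under eq_bigr => p _ do rewrite edge_label_cycle_edge.
rewrite (eq_bigl xpredT) => [|p]; last by rewrite in_setT.
rewrite -(pair_big xpredT xpredT
  (fun j k => if x \in cycle_edge (j, k) then cycle_label (j, k) else 0)) /=.
under eq_bigr => j _ do rewrite sum_cycle_labels.
by rewrite big_split /= sum_nat_const card_ord.
Qed.

Lemma cycle_sum_pred x : (cycle_sum x == (2 * n).-1) = (odd x != odd y).
Proof.
rewrite /cycle_sum; have [->|_] := eqVneq x y; first by rewrite eqxx; apply/negbTE; lia.
by case: (odd x == odd y); rewrite ?eqxx //; apply/negbTE; lia.
Qed.

Lemma circ_del_edge_labeling : 0 < m ->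
  local_antimagic (del_edge (circ_adj S) (step_edge y (nth 0 T 0) 0)) edge_label /\
  num_colors (del_edge (circ_adj S) (step_edge y (nth 0 T 0) 0)) edge_label <= 3.
Proof.
move=> m_gt0; have N_gt0 : 0 < 2 * n by lia.
have e_cycle : step_edge y (nth 0 T 0) 0 = cycle_edge (Ordinal m_gt0, Ordinal N_gt0) by [].
have f_e : edge_label (step_edge y (nth 0 T 0) 0) = 0.
  by rewrite e_cycle edge_label_cycle_edge /cycle_label /= muln0.
pose Q := \sum_(j < m) 2 * (2 * n * j).
split.
  apply: local_antimagic_del_edge => //.
  - by rewrite e_cycle edges_circ_adj imset_f ?inE.
  - move=> E E'; rewrite edges_circ_adj => /imsetP[p _ ->] /imsetP[q _ ->].
    by rewrite !edge_label_cycle_edge => /cycle_label_inj ->.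
  - move=> E; rewrite edges_circ_adj card_imset; last exact: cycle_edge_inj.
    case/imsetP=> p _ ->; rewrite edge_label_cycle_edge cardsT card_prod !card_ord.
    by rewrite mulnC cycle_label_lt.
  - move=> x x' /circ_adj_odd xx'; rewrite !vsum_edge_label eqn_add2l eqn_mul2l.
    rewrite negb_or -lt0n m_gt0 /=.
    apply: contra xx' => /eqP cs_eq; have := cycle_sum_pred x; rewrite cs_eq cycle_sum_pred.
    by case: (odd x); case: (odd x'); case: (odd y).
apply: (num_colors_le (s := [:: Q + m * n; Q + m * (2 * n); Q + m * (2 * n).-1])) => x.
rewrite vsum_del_edge // vsum_edge_label /cycle_sum !inE.
by case: ifP => _; [|case: ifP => _]; rewrite eqxx ?orbT.
Qed.

End CirculantLabeling.

Lemma circ_del_edge_local_antimagic (y : 'I_(2 * n)) s0 : s0 \in S ->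
  exists f, local_antimagic (del_edge (circ_adj S) (step_edge y s0 0)) f /\
            num_colors (del_edge (circ_adj S) (step_edge y s0 0)) f <= 3.
Proof.
move=> s0S; set T := s0 :: rem s0 (undup S).
(* Listing [s0] first makes the deleted edge the one labelled 0. *)
have T_uniq : uniq T by rewrite /= mem_rem_uniqF ?rem_uniq ?undup_uniq.
have S_T : S =i T.
  by move=> s; rewrite -mem_undup; apply/perm_mem/perm_to_rem; rewrite mem_undup.
have -> : step_edge y s0 0 = step_edge y (nth 0 T 0) 0 by [].
by exists (edge_label T y); apply: circ_del_edge_labeling.
Qed.

Lemma circ_del_edge_num_colors_ge3 (y : 'I_(2 * n)) s0 f : 1 \in S -> s0 \in S ->
  local_antimagic (del_edge (circ_adj S) (step_edge y s0 0)) f ->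
  3 <= num_colors (del_edge (circ_adj S) (step_edge y s0 0)) f.
Proof.
move=> S1 s0S [_ _ proper].
have /andP[s0_gt0 s0n] := S_range s0S.
apply: (balanced_path_num_colors_ge3 (P := fun x : 'I_(2 * n) => odd x) (N := 2 * n)
  (w := fun l => walk y 1 l.+1)) => //.
- by move=> x x' /andP[/circ_adj_odd].
- exact: card_odd_ord.
- by lia.
- move=> l lN; rewrite /del_edge circ_adj_walk //=; last by lia.
  apply/eqP => /(step_edge_inj (coprime1n _) _ s0_gt0 _ lN (ord_gt0 y)) []; lia.
- move=> x; have [[|k] kN <-] := walk_onto y (coprime1n (2 * n)) x.
    by exists (2 * n).-1; rewrite ?prednK ?(ord_gt0 y) -?(walk_modN _ _ (2 * n)) ?modnn //; lia.
  by exists k; rewrite // ltnW.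
Qed.

End Circulant.

Theorem mainTheorem8 (n : nat) (a : seq nat) :
  2 <= n ->
  sorted ltn a ->
  all (fun x => (1 < x) && (x < n)) a ->
  all (fun x => coprime x (2 * n)) a ->
  forall u v : 'I_(2 * n), circ_adj (1 :: a) u v ->
  chi_la_eq (del_edge (circ_adj (1 :: a)) [set u; v]) 3.
Proof.
move=> n_gt1 _ a_range a_coprime u v uv.
have S_coprime : {in 1 :: a, forall s, coprime s (2 * n)}.
  by apply/allP; rewrite /= coprime1n.
have S_range : {in 1 :: a, forall s, 0 < s < n}.
  by apply/allP; rewrite /= n_gt1; apply: sub_all a_range => s /andP[s_gt1 sn]; rewrite sn; lia.
have [y [s0 [s0S ->]]] := circ_adj_step_edge uv.
have [f [f_la f_le3]] := circ_del_edge_local_antimagic n_gt1 S_coprime S_range y s0S.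
have ge3 := circ_del_edge_num_colors_ge3 n_gt1 S_coprime S_range (mem_head 1 a) s0S.
split=> [|g /ge3 //]; exists f; split=> //.
by apply/eqP; rewrite eqn_leq f_le3 (ge3 _ _ f_la).
Qed.
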